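(* Let $d\colon A\to B$ be a homomorphism of finite abelian groups. Then the set of maximal elements of $\operatorname{Dec}_\mathcal{I}(d)$ equals one orbit of $\operatorname{Dec}_\mathcal{I}(d)$ under the action of $U^*(d)$.
   Context: A restriction of $d$ is a homomorphism $d'\colon A'\to B'$ with $A'\subset A$, $B'\subset B$ subgroups and $d'(a)=d(a)$ for $a\in A'$ (so $d(A')\subset B'$). $\operatorname{Dec}(d)$ is the set of pairs $(d_0,d_1)$ of restrictions $d_i\colon A_i\to B_i$ of $d$ with $A_0\oplus A_1=A$ and $B_0\oplus B_1=B$ (internal direct sums), partially ordered by $(d_0,d_1)\leq(d_0',d_1')$ iff there is a restriction $c\colon C\to D$ of $d$ with $A_0=A_0'\oplus C$, $B_0=B_0'\oplus D$, $A_1\oplus C=A_1'$, $B_1\oplus D=B_1'$. $\operatorname{Dec}_\mathcal{I}(d)$ is the subset of $(d_0,d_1)\in\operatorname{Dec}(d)$ with $d_1$ an isomorphism, with the induced order. $Q(d)=\mathbb{Z}\oplus\operatorname{Hom}(B,A)$ is the ring with multiplication $(m,f)\star(n,g)=(mn,mg+nf+f\circ d\circ g)$; $U(d)=1+\operatorname{Hom}(B,A)$ and $U^*(d)=U(d)\cap Q(d)^*$, a group. $U^*(d)$ acts on $d$ via the homomorphism $1+f\mapsto(\mathrm{id}_A+f\circ d,\ \mathrm{id}_B+d\circ f)$ into the group of pairs $(\alpha,\beta)\in\operatorname{Aut}(A)\times\operatorname{Aut}(B)$ with $\beta d=d\alpha$, and such a pair acts on $\operatorname{Dec}(d)$ by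 sending $(d_i\colon A_i\to B_i)_{i=0,1}$ to the restrictions $\alpha(A_i)\to\beta(B_i)$. *)

From HB Require Import structures.
From mathcomp Require Import all_boot all_order all_algebra.
Set Implicit Arguments. Unset Strict Implicit. Unset Printing Implicit Defensive.
Import Order.TTheory GRing.Theory Num.Theory.
Local Open Scope ring_scope.

Section Dec.
Variables (A B : finZmodType).

Definition subgrp (G : finZmodType) (S : {set G}) : Prop :=
  0 \in S /\ forall x y, x \in S -> y \in S -> x - y \in S.

Definition idsum (G : finZmodType) (S S0 S1 : {set G}) : Prop :=
  [/\ subgrp S0, subgrp S1, S0 :&: S1 = [set 0]
    & S = [set x + y | x in S0, y in S1]].

Definition restr (d : A -> B) (X : {set A}) (Y : {set B}) : Prop :=
  [/\ subgrp X, subgrp Y & d @: X \subset Y].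

(* a pair (d0 : A0 -> B0, d1 : A1 -> B1) of restrictions *)
Record decomp := Decomp {
  dA0 : {set A}; dB0 : {set B}; dA1 : {set A}; dB1 : {set B} }.

Definition in_Dec (d : A -> B) (x : decomp) : Prop :=
  [/\ restr d (dA0 x) (dB0 x), restr d (dA1 x) (dB1 x),
      idsum [set: A] (dA0 x) (dA1 x) & idsum [set: B] (dB0 x) (dB1 x)].

Definition dec_le (d : A -> B) (x y : decomp) : Prop :=
  exists (C : {set A}) (D : {set B}),
    [/\ restr d C D,
        idsum (dA0 x) (dA0 y) C, idsum (dB0 x) (dB0 y) D,
        idsum (dA1 y) (dA1 x) C & idsum (dB1 y) (dB1 x) D].

Definition in_DecI (d : A -> B) (x : decomp) : Prop :=
  [/\ in_Dec d x, {in dA1 x &, injective d} & d @: dA1 x = dB1 x].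

Definition DecI_max (d : A -> B) (x : decomp) : Prop :=
  in_DecI d x /\ forall y, in_DecI d y -> dec_le d x y -> y = x.

Definition is_hom (f : B -> A) : Prop := forall u v, f (u + v) = f u + f v.

(* The ring Q(d) = Z (+) Hom(B, A), elements (m, f) with f a homomorphism *)
Definition qmul (d : A -> B) (p q : int * (B -> A)) : int * (B -> A) :=
  (p.1 * q.1, fun b => q.2 b *~ p.1 + p.2 b *~ q.1 + p.2 (d (q.2 b))).

Definition qeq (p q : int * (B -> A)) : Prop :=
  p.1 = q.1 /\ forall b, p.2 b = q.2 b.

Definition qone : int * (B -> A) := (1%R, fun _ => 0).

Definition qunit (d : A -> B) (p : int * (B -> A)) : Prop :=
  exists q : int * (B -> A), [/\ is_hom q.2, qeq (qmul d p q) qone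
                                 & qeq (qmul d q p) qone].

(* 1 + f belongs to U^*(d) = U(d) ∩ Q(d)^* *)
Definition Ustar (d : A -> B) (f : B -> A) : Prop :=
  is_hom f /\ qunit d (1%R, f).

Definition act (d : A -> B) (f : B -> A) (x : decomp) : decomp :=
  let al := fun a => a + f (d a) in
  let be := fun b => b + d (f b) in
  Decomp (al @: dA0 x) (be @: dB0 x) (al @: dA1 x) (be @: dB1 x).

End Dec.

From HB Require Import structures.
From mathcomp Require Import all_boot all_order all_algebra.
From mathcomp Require Import zify.
From Stdlib Require Import Classical.
Set Implicit Arguments. Unset Strict Implicit. Unset Printing Implicit Defensive.
Import Order.TTheory GRing.Theory Num.Theory.
Local Open Scope ring_scope.

(* An element of Dec_I(d) is the same thing as a homomorphism g : B -> A which
   is idempotent for the product f * h = f \o d \o h of Q(d): it corresponds to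
   A = ker(g d) + im(g d), B = ker(d g) + im(d g).  If a corner (1 - g) k (1 - g)
   is not nilpotent, one of its powers is a nonzero idempotent orthogonal to g,
   and adding it to g gives a strictly larger decomposition; hence all corners of
   a maximal g are nilpotent.  For two such idempotents g and g', this nilpotency
   makes (1 - g')(1 - g) + g' g a unit of Q(d), and that unit carries the
   decomposition of g to the one of g'.  Conversely U*(d) preserves Dec_I(d) and
   |A_1|, and a decomposition maximizing |A_1| is maximal, so the maximal
   elements form the orbit of any such decomposition. *)

Section Homomorphisms.
Variables G H K : finZmodType.

Lemma hom0 (f : G -> H) : is_hom f -> f 0 = 0.
Proof. by move=> hf; apply: (addrI (f 0)); rewrite -hf !addr0. Qed.

Lemma homN (f : G -> H) : is_hom f -> {morph f : x / - x}.
Proof. by move=> hf x; apply: (addrI (f x)); rewrite -hf !subrr hom0. Qed.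

Lemma homB (f : G -> H) : is_hom f -> {morph f : x y / x - y}.
Proof. by move=> hf x y; rewrite hf homN. Qed.

Lemma additive_is_hom (f : {additive G -> H}) : is_hom f.
Proof. by move=> u v; rewrite raddfD. Qed.

Lemma is_hom_id : is_hom (fun x : G => x).
Proof. by []. Qed.

Lemma is_hom_comp (f : H -> K) (g : G -> H) :
  is_hom f -> is_hom g -> is_hom (fun x => f (g x)).
Proof. by move=> hf hg u v; rewrite hg hf. Qed.

Lemma is_homD (f g : G -> H) : is_hom f -> is_hom g -> is_hom (fun x => f x + g x).
Proof. by move=> hf hg u v; rewrite hf hg addrACA. Qed.

Lemma is_homB (f g : G -> H) : is_hom f -> is_hom g -> is_hom (fun x => f x - g x).
Proof. by move=> hf hg u v; rewrite hf hg opprD addrACA. Qed.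

Lemma hom_inj (f : G -> H) : is_hom f -> (forall x, f x = 0 -> x = 0) -> injective f.
Proof.
move=> hf f0 x y e; apply/eqP; rewrite -subr_eq0; apply/eqP/f0.
by rewrite homB // e subrr.
Qed.

End Homomorphisms.

Section Subgroups.
Variables G H : finZmodType.
Implicit Types S : {set G}.

Definition kerf (f : G -> H) : {set G} := [set x | f x == 0].
Definition imf (f : G -> H) : {set H} := [set f x | x in [set: G]].

Lemma in_imf (f : G -> H) x : f x \in imf f.
Proof. by rewrite imset_f ?inE. Qed.

Lemma eq_kerf (f f' : G -> H) : f =1 f' -> kerf f = kerf f'.
Proof. by move=> eff'; apply/setP=> x; rewrite !inE eff'. Qed.

Lemma eq_imf (f f' : G -> H) : f =1 f' -> imf f = imf f'.
Proof. exact: eq_imset. Qed.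

Lemma subgrp0 S : subgrp S -> 0 \in S.
Proof. by case. Qed.

Lemma subgrpN S : subgrp S -> forall x, x \in S -> - x \in S.
Proof. by case=> S0 SB x Sx; rewrite -sub0r SB. Qed.

Lemma subgrpD S : subgrp S -> forall x y, x \in S -> y \in S -> x + y \in S.
Proof. by move=> sgS x y Sx Sy; rewrite -[y]opprK sgS.2 ?subgrpN. Qed.

Lemma subgrp_kerf (f : G -> H) : is_hom f -> subgrp (kerf f).
Proof.
move=> hf; split=> [|x y]; first by rewrite inE (hom0 hf).
by rewrite !inE homB // => /eqP-> /eqP->; rewrite subrr.
Qed.

Lemma subgrp_imset (f : G -> H) S : is_hom f -> subgrp S -> subgrp (f @: S).
Proof.
move=> hf sgS; split; first by apply/imsetP; exists 0; rewrite ?hom0 ?subgrp0.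
move=> _ _ /imsetP[x Sx ->] /imsetP[y Sy ->]; apply/imsetP; exists (x - y).
  exact: sgS.2.
by rewrite homB.
Qed.

Lemma subgrp_imf (f : G -> H) : is_hom f -> subgrp (imf f).
Proof. by move=> hf; apply: subgrp_imset => //; split=> *; rewrite inE. Qed.

Lemma subgrp_card_gt0 S : subgrp S -> (0 < #|S|)%N.
Proof. by move=> sgS; apply/card_gt0P; exists 0; apply: subgrp0. Qed.

Lemma idsum_subgrpl S S0 S1 : idsum S S0 S1 -> subgrp S0.
Proof. by case. Qed.

Lemma idsum_subgrpr S S0 S1 : idsum S S0 S1 -> subgrp S1.
Proof. by case. Qed.

Lemma card_idsum S S0 S1 : idsum S S0 S1 -> #|S| = (#|S0| * #|S1|)%N.
Proof.
case=> sg0 sg1 S01 ->; rewrite curry_imset2X card_in_imset ?cardsX //.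
move=> [x y] [x' y']; rewrite !in_setX /= => /andP[Sx Sy] /andP[Sx' Sy'] e.
have exy : x - x' = y' - y by rewrite -[x](addrK y) e addrAC [x' + _]addrC addrK.
have : x - x' \in S0 :&: S1 by rewrite inE sg0.2 //= exy sg1.2.
rewrite S01 inE subr_eq0 => /eqP ex; subst x'.
by move/addrI: e => ->.
Qed.

Lemma idsum_card1 S S0 S1 : idsum S S0 S1 -> (#|S1| <= 1)%N -> S = S0.
Proof.
move=> sS le1; have cS := card_idsum sS.
case: sS => sg0 sg1 _ eS.
have sub : S0 \subset S.
  apply/subsetP=> x Sx; rewrite eS -[x]addr0; apply/imset2P.
  by exists x 0 => //; apply: subgrp0.
apply/eqP; rewrite eq_sym eqEcard sub cS.
have := subgrp_card_gt0 sg1; nia.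
Qed.

End Subgroups.

Section DirectSums.
Variable G : finZmodType.
Implicit Types (S : {set G}) (f : G -> G).

Lemma idsum_imset f S0 S1 : is_hom f -> injective f ->
  idsum [set: G] S0 S1 -> idsum [set: G] (f @: S0) (f @: S1).
Proof.
move=> hf injf [sg0 sg1 S01 eS]; split; try exact: subgrp_imset.
  by rewrite -imsetI ?S01 ?imset_set1 ?hom0 // => x y _ _; apply: injf.
have imfT : f @: [set: G] = [set: G].
  by apply/eqP; rewrite eqEcard subsetT (card_imset _ injf) /=.
apply/setP=> x; rewrite inE; symmetry; apply/imset2P.
have /imsetP[y _ ->] : x \in f @: [set: G] by rewrite imfT inE.
have : y \in [set: G] by rewrite inE.
rewrite eS => /imset2P[y0 y1 Sy0 Sy1 ->].
by exists (f y0) (f y1); rewrite ?hf ?imset_f.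
Qed.

Lemma imset_idsum_eq f S0 S1 S0' S1' : injective f ->
  idsum [set: G] S0 S1 -> idsum [set: G] S0' S1' ->
  f @: S0 \subset S0' -> f @: S1 \subset S1' -> f @: S0 = S0' /\ f @: S1 = S1'.
Proof.
move=> injf sS sS' sub0 sub1; have [sg0 sg1 _ _] := sS.
have cS := card_idsum sS; have cS' := card_idsum sS'.
have gt0 := subgrp_card_gt0 sg0; have gt1 := subgrp_card_gt0 sg1.
have le0 := subset_leq_card sub0; have le1 := subset_leq_card sub1.
rewrite !(card_imset _ injf) in le0 le1.
have e0 : #|S0'| = #|S0| by nia.
have e1 : #|S1'| = #|S1| by nia.
by split; apply/eqP; rewrite eqEcard ?sub0 ?sub1 (card_imset _ injf) ?e0 ?e1 /=.
Qed.

Lemma idsum_kerf_imf f : is_hom f -> (forall x, f (f x) = f x) ->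
  idsum [set: G] (kerf f) (imf f).
Proof.
move=> hf ff; split; [exact: subgrp_kerf|exact: subgrp_imf| |].
  apply/setP=> x; rewrite !inE; apply/andP/eqP => [[/eqP fx0 /imsetP[y _ exy]]|->].
    by rewrite exy -ff -exy fx0.
  by rewrite (hom0 hf) eqxx; split=> //; apply/imsetP; exists 0; rewrite ?inE ?hom0.
apply/setP=> x; rewrite inE; symmetry; apply/imset2P.
exists (x - f x) (f x); rewrite ?inE ?homB ?ff ?subrr ?subrK ?in_imf //.
Qed.

Section Orthogonal.
Variables E P : G -> G.
Hypotheses (hE : is_hom E) (hP : is_hom P).
Hypotheses (EE : forall x, E (E x) = E x) (PP : forall x, P (P x) = P x).
Hypotheses (EP : forall x, E (P x) = 0) (PE : forall x, P (E x) = 0).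

Lemma idsum_kerf_orth : idsum (kerf E) (kerf (fun x => E x + P x)) (imf P).
Proof.
split; [exact/subgrp_kerf/is_homD|exact: subgrp_imf| |].
  apply/setP=> x; rewrite !inE; apply/andP/eqP => [[/eqP EPx0 /imsetP[y _ exy]]|->].
    by move: EPx0; rewrite exy EP PP add0r.
  by rewrite (hom0 hE) (hom0 hP) addr0 eqxx; split=> //; apply/imsetP; exists 0; rewrite ?inE ?hom0.
apply/setP=> x; rewrite inE; apply/eqP/imset2P => [Ex0|[u _ + /imsetP[z _ ->] ->]].
  exists (x - P x) (P x); rewrite ?inE ?subrK ?imset_f ?inE //.
  by rewrite (homB hE) (homB hP) Ex0 EP PP !subrr addr0.
rewrite inE => /eqP EPu0.
have Eu0 : E u = 0 by have := congr1 E EPu0; rewrite hE EE EP (hom0 hE) addr0.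
by rewrite hE Eu0 EP addr0.
Qed.

Lemma idsum_imf_orth : idsum (imf (fun x => E x + P x)) (imf E) (imf P).
Proof.
split; [exact: subgrp_imf|exact: subgrp_imf| |].
  apply/setP=> x; rewrite !inE; apply/andP/eqP => [[/imsetP[y _ ->] /imsetP[z _ ez]]|->].
    by rewrite -EE ez EP.
  by split; apply/imsetP; exists 0; rewrite ?inE ?hom0.
apply/setP=> x; apply/imsetP/imset2P => [[z _ ->]|[_ _ /imsetP[y _ ->] /imsetP[z _ ->] ->]].
  by exists (E z) (P z); rewrite ?imset_f ?inE.
exists (E y + P z); rewrite ?inE //.
by rewrite hE hP EE EP PE PP addr0 add0r.
Qed.

End Orthogonal.
End DirectSums.

(* With F = (h * _) and x = h in a finite semigroup, this says that h^(k+1) is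
   idempotent. *)
Lemma exists_iter_idem (T : finType) (F : T -> T) (x : T) :
  exists k, iter (k + k).+1 F x = iter k F x.
Proof.
have /trajectP[i lt_i_n e] := looping_order F x.
set n := order F x in lt_i_n e; set p := (n - i)%N.
have p_gt0 : (0 < p)%N by rewrite subn_gt0.
have periodic q m : iter (q * p + m + i) F x = iter (m + i) F x.
  elim: q => [|q IHq]; first by rewrite mul0n add0n.
  have -> : (q.+1 * p + m + i = q * p + m + n)%N by rewrite /p mulSn; lia.
  by rewrite iterD e -iterD IHq.
set k := (p * n.+1).-1; exists k.
have le_i_k : (i <= k)%N by rewrite /k; nia.
have -> : ((k + k).+1 = n.+1 * p + (k - i) + i)%N by rewrite /k; nia.
by rewrite periodic subnK.
Qed.

Section Idempotents.
Variables (A B : finZmodType) (d : {additive A -> B}).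

Let hd : is_hom d := additive_is_hom d.

Definition idem (g : B -> A) := is_hom g /\ forall b, g (d (g b)) = g b.

Definition dec_of (g : B -> A) : decomp A B :=
  Decomp (kerf (fun a => g (d a))) (kerf (fun b => d (g b)))
         (imf (fun a => g (d a))) (imf (fun b => d (g b))).

Lemma in_DecI_dec_of g : idem g -> in_DecI d (dec_of g).
Proof.
case=> hg gdg; have hgd := is_hom_comp hg hd; have hdg := is_hom_comp hd hg.
split; first split.
- split; [exact: subgrp_kerf|exact: subgrp_kerf|].
  by apply/subsetP=> _ /imsetP[a + ->]; rewrite !inE => /eqP->; rewrite raddf0.
- split; [exact: subgrp_imf|exact: subgrp_imf|].
  by apply/subsetP=> _ /imsetP[_ /imsetP[a _ ->] ->]; apply: in_imf.
- by apply: idsum_kerf_imf => // a; rewrite gdg.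
- by apply: idsum_kerf_imf => // b; rewrite gdg.
- by move=> _ _ /imsetP[a _ ->] /imsetP[a' _ ->] /= e; rewrite -gdg e gdg.
apply/setP=> b; apply/imsetP/imsetP => [[_ /imsetP[a _ ->] ->]|[b' _ ->]].
  by exists (d a).
by exists (g (d (g b'))); [apply: in_imf|rewrite gdg].
Qed.

Section Projection.
Variables (A0 A1 : {set A}) (B0 B1 : {set B}).
Hypotheses (sumA : idsum [set: A] A0 A1) (sumB : idsum [set: B] B0 B1).
Hypotheses (dA0B0 : d @: A0 \subset B0) (injd : {in A1 &, injective d}) (dA1B1 : d @: A1 = B1).

Definition dec_proj (b : B) : A := odflt 0 [pick a in A1 | b - d a \in B0].

Lemma dec_projP b : dec_proj b \in A1 /\ b - d (dec_proj b) \in B0.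
Proof.
rewrite /dec_proj; case: pickP => [a /andP[]|none] //=.
have [_ _ _ eB] := sumB; have : b \in [set: B] by rewrite inE.
rewrite eB -dA1B1 => /imset2P[b0 _ B0b0 /imsetP[a1 A1a1 ->] eb].
by have := none a1; rewrite /= A1a1 eb addrK B0b0.
Qed.

Lemma dec_proj_eq b a : a \in A1 -> b - d a \in B0 -> dec_proj b = a.
Proof.
move=> A1a B0ba; have [A1pb B0bpb] := dec_projP b.
have [sgB0 sgB1 B01 _] := sumB.
have : d (dec_proj b) - d a \in B0 :&: B1.
  rewrite inE sgB1.2 -?dA1B1 ?imset_f // andbT.
  have -> : d (dec_proj b) - d a = (b - d a) - (b - d (dec_proj b)).
    by rewrite opprB [RHS]addrC addrA subrK.
  exact: sgB0.2.
by rewrite B01 inE subr_eq0 => /eqP /injd; apply.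
Qed.

Lemma dec_proj_d a : a \in A1 -> dec_proj (d a) = a.
Proof. by move=> A1a; apply: dec_proj_eq; rewrite ?subrr ?(subgrp0 (idsum_subgrpl sumB)). Qed.

Lemma dec_proj_B0 b : b \in B0 -> dec_proj b = 0.
Proof.
by move=> B0b; apply: dec_proj_eq; rewrite ?(subgrp0 (idsum_subgrpr sumA)) // raddf0 subr0.
Qed.

Lemma idem_dec_proj : idem dec_proj.
Proof.
split=> [u v|b]; last by rewrite dec_proj_d; case: (dec_projP b).
have [[A1u B0u] [A1v B0v]] := (dec_projP u, dec_projP v).
apply: dec_proj_eq; first exact: subgrpD (idsum_subgrpr sumA) _ _ A1u A1v.
have -> : u + v - d (dec_proj u + dec_proj v) =
          (u - d (dec_proj u)) + (v - d (dec_proj v)) by rewrite raddfD opprD addrACA.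
exact: subgrpD (idsum_subgrpl sumB) _ _ B0u B0v.
Qed.

Lemma dec_of_dec_proj : dec_of dec_proj = Decomp A0 B0 A1 B1.
Proof.
have d_A0 a : a \in A0 -> d a \in B0 by move=> A0a; apply: (subsetP dA0B0); apply: imset_f.
have [hp _] := idem_dec_proj.
congr Decomp; apply/setP.
- move=> a; rewrite inE; apply/eqP/idP => [pda0|/d_A0/dec_proj_B0 //].
  have [_ _ _ eA] := sumA; have : a \in [set: A] by rewrite inE.
  rewrite eA => /imset2P[a0 a1 A0a0 A1a1 ea]; move: pda0.
  by rewrite ea raddfD hp (dec_proj_d A1a1) (dec_proj_B0 (d_A0 _ A0a0)) add0r => ->; rewrite addr0.
- move=> b; rewrite inE; apply/eqP/idP => [dpb0|/dec_proj_B0->]; last by rewrite raddf0.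
  by have [_] := dec_projP b; rewrite dpb0 subr0.
- move=> a; apply/imsetP/idP => [[a' _ ->]|A1a]; first by case: (dec_projP (d a')).
  by exists a; rewrite ?inE ?dec_proj_d.
move=> b; apply/imsetP/idP => [[b' _ ->]|].
  by rewrite -dA1B1 imset_f //; case: (dec_projP b').
by rewrite -dA1B1 => /imsetP[a A1a ->]; exists (d a); rewrite ?inE ?dec_proj_d.
Qed.

End Projection.

Lemma in_DecI_idem x : in_DecI d x -> exists2 g, idem g & x = dec_of g.
Proof.
case: x => A0 B0 A1 B1 [[[_ _ dA0B0] _ sumA sumB] injd dA1B1] /=.
exists (dec_proj A1 B0); first exact: idem_dec_proj sumA sumB injd dA1B1.
by rewrite (dec_of_dec_proj sumA sumB dA0B0 injd dA1B1).
Qed.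

Fixpoint dpow (h : B -> A) (n : nat) : B -> A :=
  if n is n'.+1 then fun b => h (d (dpow h n' b)) else h.

Definition nilp (h : B -> A) := exists n, forall b, dpow h n b = 0.

Lemma dpow_add h m n b : dpow h (m + n).+1 b = dpow h m (d (dpow h n b)).
Proof. by elim: m b => [|m IHm] b //=; rewrite -IHm. Qed.

Lemma is_hom_dpow h n : is_hom h -> is_hom (dpow h n).
Proof. by move=> hh; elim: n => [|n IHn] //= u v; rewrite IHn raddfD hh. Qed.

Lemma exists_idem_dpow h : is_hom h -> exists k, idem (dpow h k).
Proof.
move=> hh; pose F (f : {ffun B -> A}) := [ffun b => h (d (f b))].
have dpowE n b : dpow h n b = iter n F [ffun b => h b] b.
  by elim: n b => [|n IHn] b /=; rewrite ffunE ?IHn.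
have [k Fk] := exists_iter_idem F [ffun b => h b].
exists k; split=> [|b]; first exact: is_hom_dpow.
by rewrite -dpow_add !dpowE Fk.
Qed.

Lemma nilp_fix0 h b : nilp h -> b = d (h b) -> b = 0.
Proof.
case=> n hn0 bdh; suff -> : b = d (dpow h n b) by rewrite hn0 raddf0.
by elim: n {hn0} => [|n IHn] //=; rewrite -IHn.
Qed.

(* [corner g k] is (1 - g) k (1 - g) in Q(d). *)
Definition corner (g k : B -> A) (b : B) : A :=
  k (b - d (g b)) - g (d (k (b - d (g b)))).

Section Corner.
Variables g k : B -> A.
Hypotheses (idem_g : idem g) (hk : is_hom k).

Lemma is_hom_corner : is_hom (corner g k).
Proof.
have [hg _] := idem_g; have hkg := is_hom_comp hk (is_homB (@is_hom_id _) (is_hom_comp hd hg)).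
exact: is_homB hkg (is_hom_comp hg (is_hom_comp hd hkg)).
Qed.

Lemma corner_orthl b : g (d (corner g k b)) = 0.
Proof. by have [hg gdg] := idem_g; rewrite /corner raddfB (homB hg) gdg subrr. Qed.

Lemma corner_orthr b : corner g k (d (g b)) = 0.
Proof.
have [hg gdg] := idem_g.
by rewrite /corner gdg subrr (hom0 hk) raddf0 (hom0 hg) subrr.
Qed.

Lemma exists_orth_idem : ~ nilp (corner g k) ->
  exists2 p, idem p & [/\ forall b, g (d (p b)) = 0, forall b, p (d (g b)) = 0
                        & exists b, p b != 0].
Proof.
move=> not_nilp; have [n idem_p] := exists_idem_dpow is_hom_corner.
exists (dpow (corner g k) n) => //; split.
- by case: n {idem_p} => [|n] b /=; apply: corner_orthl.
- elim: n {idem_p} => [|n IHn] b /=; first exact: corner_orthr.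
  by rewrite IHn raddf0 (hom0 is_hom_corner).
case: (pickP (fun b => dpow (corner g k) n b != 0)) => [b nz_b|p0]; first by exists b.
by case: not_nilp; exists n => b; apply/eqP/negbFE/p0.
Qed.

End Corner.

Section OrthogonalSum.
Variables g p : B -> A.
Hypotheses (idem_g : idem g) (idem_p : idem p).
Hypotheses (gp : forall b, g (d (p b)) = 0) (pg : forall b, p (d (g b)) = 0).

Let hg : is_hom g := idem_g.1.
Let hp : is_hom p := idem_p.1.

Lemma idem_add_orth : idem (fun b => g b + p b).
Proof.
split; first exact: is_homD.
by move=> b; rewrite raddfD hg hp idem_g.2 idem_p.2 gp pg addr0 add0r.
Qed.

Let gdgd a : g (d (g (d a))) = g (d a). Proof. exact: idem_g.2. Qed.
Let pdpd a : p (d (p (d a))) = p (d a). Proof. exact: idem_p.2. Qed.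
Let dgdg b : d (g (d (g b))) = d (g b). Proof. by rewrite idem_g.2. Qed.
Let dpdp b : d (p (d (p b))) = d (p b). Proof. by rewrite idem_p.2. Qed.
Let gpB b : d (g (d (p b))) = 0. Proof. by rewrite gp raddf0. Qed.
Let pgB b : d (p (d (g b))) = 0. Proof. by rewrite pg raddf0. Qed.
Let hgd : is_hom (fun a => g (d a)). Proof. exact: is_hom_comp. Qed.
Let hpd : is_hom (fun a => p (d a)). Proof. exact: is_hom_comp. Qed.
Let hdg : is_hom (fun b => d (g b)). Proof. exact: is_hom_comp. Qed.
Let hdp : is_hom (fun b => d (p b)). Proof. exact: is_hom_comp. Qed.

Lemma dec_le_add_orth : dec_le d (dec_of g) (dec_of (fun b => g b + p b)).
Proof.
have dgp b : d (g b + p b) = d (g b) + d (p b) by rewrite raddfD.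
exists (imf (fun a => p (d a))), (imf (fun b => d (p b))); split=> /=.
- split; [exact: subgrp_imf|exact: subgrp_imf|].
  by apply/subsetP=> _ /imsetP[_ /imsetP[a _ ->] ->]; apply: in_imf.
- exact: idsum_kerf_orth.
- by rewrite (eq_kerf dgp); apply: idsum_kerf_orth.
- exact: idsum_imf_orth.
- by rewrite (eq_imf dgp); apply: idsum_imf_orth.
Qed.

Lemma card_dA1_add_orth :
  #|dA1 (dec_of (fun b => g b + p b))| = (#|dA1 (dec_of g)| * #|imf (fun a => p (d a))|)%N.
Proof. exact/card_idsum/idsum_imf_orth. Qed.

End OrthogonalSum.

Lemma DecI_max_corner_nilp g k :
  idem g -> DecI_max d (dec_of g) -> is_hom k -> nilp (corner g k).
Proof.
move=> idem_g [_ g_max] hk; apply: NNPP => not_nilp.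
have [p idem_p [gp pg [b pb_neq0]]] := exists_orth_idem idem_g hk not_nilp.
have := card_dA1_add_orth idem_g idem_p gp pg.
rewrite (g_max _ (in_DecI_dec_of (idem_add_orth idem_g idem_p gp pg))
                 (dec_le_add_orth idem_g idem_p gp pg)).
have hpd := is_hom_comp idem_p.1 hd; have hgd := is_hom_comp idem_g.1 hd.
have : (1 < #|imf (fun a => p (d a))|)%N.
  apply/card_gt1P; exists 0, (p b); split; first exact/subgrp0/subgrp_imf.
    by rewrite -idem_p.2 in_imf.
  by rewrite eq_sym.
have := subgrp_card_gt0 (subgrp_imf hgd); rewrite [dA1 _]/=; nia.
Qed.

Lemma Ustar_injective f : Ustar d f ->
  [/\ is_hom f, injective (fun a => a + f (d a)) & injective (fun b => b + d (f b))].
Proof.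
case=> hf [[q1 q] [/= hq [/= q1E _] [/= _ qf0]]].
rewrite mul1r in q1E; subst q1.
have fq0 b : f b + q b + q (d (f b)) = 0 by have := qf0 b; rewrite /= !mulr1z.
split=> //.
  apply: (can_inj (g := fun a => a + q (d a))) => a /=.
  by rewrite raddfD hq -addrA [f _ + _]addrA fq0 addr0.
apply: (can_inj (g := fun b => b + d (q b))) => b /=.
by rewrite hq raddfD -addrA [d (f _) + _]addrA -!raddfD fq0 raddf0 addr0.
Qed.

(* The inverse of 1 + f in Q(d) is 1 - f \o beta^-1, where beta = id + d \o f. *)
Lemma Ustar_of_injective f :
  is_hom f -> injective (fun b => b + d (f b)) -> Ustar d f.
Proof.
move=> hf; set beta := fun b => b + d (f b) => inj_beta.
have hbeta : is_hom beta := is_homD (@is_hom_id _) (is_hom_comp hd hf).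
pose binv := invF inj_beta.
have hbinv : is_hom binv by move=> u v; apply: (inj_beta); rewrite hbeta /binv !f_invF.
split=> //; exists (1%R, fun b => - f (binv b)); split=> /=.
- by move=> u v; rewrite hbinv hf opprD.
- split=> //= b; rewrite !mulr1z.
  have {2}-> : b = beta (binv b) by rewrite /binv f_invF.
  by rewrite /beta -/(binv b) raddfN (homN hf) hf addrA addNr add0r subrr.
- split=> //= b; rewrite !mulr1z -addrA -opprD -(hf (binv b)) -hbinv.
  by rewrite -/(beta b) /binv invF_f subrr.
Qed.

Section Transport.
Variables g g' : B -> A.
Hypotheses (idem_g : idem g) (idem_g' : idem g').

Let hg : is_hom g := idem_g.1.
Let hg' : is_hom g' := idem_g'.1.
Let gdg : forall b, g (d (g b)) = g b := idem_g.2.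
Let gdg' : forall b, g' (d (g' b)) = g' b := idem_g'.2.

(* 1 + transport is (1 - g') (1 - g) + g' g in Q(d). *)
Definition transport (b : B) : A := (g' (d (g b)) - g b) + (g' (d (g b)) - g' b).

Lemma is_hom_transport : is_hom transport.
Proof.
have hgdg := is_hom_comp hg' (is_hom_comp hd hg).
exact: is_homD (is_homB hgdg hg) (is_homB hgdg hg').
Qed.

Lemma transport_kerA a : g (d a) = 0 -> a + transport (d a) = a - g' (d a).
Proof. by move=> ga0; rewrite /transport ga0 raddf0 (hom0 hg') subrr !add0r. Qed.

Lemma transport_imA a : g (d a) + transport (d (g (d a))) = g' (d (g (d a))).
Proof. by rewrite /transport gdg subrr addr0 addrC subrK. Qed.

Lemma transport_kerB b : d (g b) = 0 -> b + d (transport b) = b - d (g' b).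
Proof.
move=> dgb0; rewrite /transport dgb0 (hom0 hg') !sub0r raddfD !raddfN dgb0.
by rewrite oppr0 add0r.
Qed.

Lemma transport_imB b : d (g b) + d (transport (d (g b))) = d (g' (d (g b))).
Proof. by rewrite /transport gdg subrr addr0 raddfB addrC subrK. Qed.

Hypotheses (nilp_g'g : nilp (corner g' g)) (nilp_gg' : nilp (corner g g')).

Lemma transport_injB : injective (fun b => b + d (transport b)).
Proof.
apply: hom_inj => [|b]; first exact: is_homD (@is_hom_id _) (is_hom_comp hd is_hom_transport).
set u := b - d (g b); set w := d (g b).
have dgu0 : d (g u) = 0 by rewrite /u (homB hg) raddfB gdg subrr.
have b_uw : b = u + w by rewrite subrK.
have hbeta := is_homD (@is_hom_id _) (is_hom_comp hd is_hom_transport).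
rewrite b_uw hbeta transport_kerB // transport_imB => e.
have dg'w0 : d (g' w) = 0.
  have := congr1 (fun x => d (g' x)) e; rewrite /= (hom0 hg') raddf0.
  by rewrite hg' raddfD (homB hg') raddfB !gdg' subrr add0r.
move: e; rewrite dg'w0 addr0 => /eqP; rewrite subr_eq0 => /eqP u_dg'u.
have -> : u = 0.
  by apply: (nilp_fix0 nilp_gg'); rewrite /corner dgu0 !subr0 raddfB -u_dg'u dgu0 subr0.
suff -> : w = 0 by rewrite addr0.
apply: (nilp_fix0 nilp_g'g).
by rewrite /corner dg'w0 !subr0 /w gdg raddfB -/w dg'w0 subr0.
Qed.

Lemma Ustar_transport : Ustar d transport.
Proof. exact: Ustar_of_injective is_hom_transport transport_injB. Qed.

Lemma act_transport : act d transport (dec_of g) = dec_of g'.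
Proof.
have [_ inj_alpha inj_beta] := Ustar_injective Ustar_transport.
have hgd := is_hom_comp hg hd; have hg'd := is_hom_comp hg' hd.
have hdg := is_hom_comp hd hg; have hdg' := is_hom_comp hd hg'.
rewrite /act /dec_of /=.
have [-> ->] : (fun a => a + transport (d a)) @: kerf (fun a => g (d a)) = kerf (fun a => g' (d a))
            /\ (fun a => a + transport (d a)) @: imf (fun a => g (d a)) = imf (fun a => g' (d a)).
  apply: imset_idsum_eq => //; try by apply: idsum_kerf_imf => // a; rewrite ?gdg ?gdg'.
    apply/subsetP=> _ /imsetP[a + ->]; rewrite !inE => /eqP gda0.
    by rewrite transport_kerA // raddfB (homB hg') gdg' subrr.
  apply/subsetP=> _ /imsetP[_ /imsetP[a _ ->] ->].
  by rewrite transport_imA; apply: in_imf.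
have [-> ->] : (fun b => b + d (transport b)) @: kerf (fun b => d (g b)) = kerf (fun b => d (g' b))
            /\ (fun b => b + d (transport b)) @: imf (fun b => d (g b)) = imf (fun b => d (g' b)).
  apply: imset_idsum_eq => //; try by apply: idsum_kerf_imf => // b; rewrite ?gdg ?gdg'.
    apply/subsetP=> _ /imsetP[b + ->]; rewrite !inE => /eqP dgb0.
    by rewrite transport_kerB // (homB hdg') /= gdg' subrr.
  apply/subsetP=> _ /imsetP[_ /imsetP[b _ ->] ->].
  by rewrite transport_imB; apply: in_imf.
by [].
Qed.

End Transport.

Section Action.
Variables (f : B -> A) (x : decomp A B).
Hypotheses (Uf : Ustar d f) (DecI_x : in_DecI d x).

Lemma card_dA1_act : #|dA1 (act d f x)| = #|dA1 x|.
Proof. by have [_ inj_alpha _] := Ustar_injective Uf; rewrite card_imset. Qed.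

Lemma in_DecI_act : in_DecI d (act d f x).
Proof.
have [hf inj_alpha inj_beta] := Ustar_injective Uf.
set alpha := fun a => a + f (d a); set beta := fun b => b + d (f b).
have halpha : is_hom alpha := is_homD (@is_hom_id _) (is_hom_comp hf hd).
have hbeta : is_hom beta := is_homD (@is_hom_id _) (is_hom_comp hd hf).
have d_alpha a : d (alpha a) = beta (d a) by rewrite /alpha /beta raddfD.
have restr_act X Y : restr d X Y -> restr d (alpha @: X) (beta @: Y).
  case=> sgX sgY dXY; split; try exact: subgrp_imset.
  apply/subsetP=> _ /imsetP[_ /imsetP[a Xa ->] ->]; rewrite d_alpha imset_f //.
  by apply: (subsetP dXY); apply: imset_f.
case: x DecI_x => A0 B0 A1 B1 [[rA0 rA1 sumA sumB] inj_d dA1B1]; rewrite /= in dA1B1.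
rewrite /act /= -/alpha -/beta.
split; first split; try exact: restr_act; try exact: idsum_imset.
  move=> _ _ /imsetP[a A1a ->] /imsetP[a' A1a' ->]; rewrite !d_alpha => /inj_beta.
  by move/inj_d=> -> //.
by rewrite -dA1B1 -!imset_comp; apply: eq_imset => a /=.
Qed.

End Action.

Lemma card_dB1 x : in_DecI d x -> #|dB1 x| = #|dA1 x|.
Proof. by case=> _ inj_d <-; rewrite card_in_imset. Qed.

Lemma DecI_max_of_rank_max x : in_DecI d x ->
  (forall y, in_DecI d y -> (#|dA1 y| <= #|dA1 x|)%N) -> DecI_max d x.
Proof.
move=> DecI_x x_max; split=> // y DecI_y [C [D [_ sumA0 sumB0 sumA1 sumB1]]].
have [[_ [sgA1 _ _] _ _] _ _] := DecI_x.
have gt0 := subgrp_card_gt0 sgA1; have le := x_max y DecI_y.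
have cA := card_idsum sumA1; have cB := card_idsum sumB1.
rewrite !card_dB1 // in cB.
have C1 : (#|C| <= 1)%N by nia.
have D1 : (#|D| <= 1)%N by nia.
case: x y {DecI_x x_max DecI_y gt0 le cA cB sgA1} sumA0 sumB0 sumA1 sumB1 => ? ? ? ? [? ? ? ?] /=.
by move=> /idsum_card1-> // /idsum_card1-> // /idsum_card1-> // /idsum_card1->.
Qed.

Lemma exists_rank_max_DecI :
  exists2 x0, in_DecI d x0 & forall y, in_DecI d y -> (#|dA1 y| <= #|dA1 x0|)%N.
Proof.
pose idemb (f : {ffun B -> A}) :=
  [forall u, forall v, f (u + v) == f u + f v] && [forall b, f (d (f b)) == f b].
have idembP (f : {ffun B -> A}) : reflect (idem f) (idemb f).
  apply: (iffP andP) => [[/forallP fD /forallP fdf]|[fD fdf]]; split.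
  - by move=> u v; apply/eqP/(forallP (fD u)).
  - by move=> b; apply/eqP.
  - by apply/forallP=> u; apply/forallP=> v; rewrite fD.
  - by apply/forallP=> b; rewrite fdf.
have idemb0 : idemb [ffun => 0] by apply/idembP; split=> [u v|b]; rewrite !ffunE ?addr0.
have [f0 /idembP idem_f0 f0_max] := arg_maxnP (fun f : {ffun B -> A} => #|dA1 (dec_of f)|) idemb0.
exists (dec_of f0); first exact: in_DecI_dec_of.
move=> _ /in_DecI_idem[g idem_g ->].
have idem_fg : idem [ffun b => g b].
  by case: idem_g => hg gdg; split=> [u v|b]; rewrite !ffunE ?hg ?gdg.
have := f0_max _ (introT (idembP _) idem_fg).
by rewrite /= (@eq_imf _ _ _ (fun a => g (d a))) // => a; rewrite ffunE.
Qed.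

End Idempotents.

Theorem proposition4p8 (A B : finZmodType) (d : {additive A -> B}) :
  exists x0 : decomp A B,
    in_DecI d x0 /\
    forall x : decomp A B, DecI_max d x <-> exists f : B -> A, Ustar d f /\ x = act d f x0.
Proof.
have [x0 DecI_x0 x0_max] := exists_rank_max_DecI d.
have [g0 idem_g0 x0E] := in_DecI_idem DecI_x0.
have max_x0 : DecI_max d x0 := DecI_max_of_rank_max DecI_x0 x0_max.
exists x0; split=> // x; split=> [max_x|[f [Uf ->]]].
- have [g idem_g xE] := in_DecI_idem max_x.1.
  rewrite x0E in max_x0; rewrite xE in max_x.
  have nilp_gg0 := DecI_max_corner_nilp idem_g max_x idem_g0.1.
  have nilp_g0g := DecI_max_corner_nilp idem_g0 max_x0 idem_g.1.
  exists (transport d g0 g); split; first exact: Ustar_transport.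
  by rewrite xE x0E act_transport.
apply: DecI_max_of_rank_max => [|y DecI_y]; first exact: in_DecI_act.
by rewrite card_dA1_act //; apply: x0_max.
Qed.
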